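(* For any positive integer $k$, as formal power series in $q$, $$\sum_{n=0}^{\infty}D_k(n)q^n=\sum_{n=0}^{\infty}q^{nk}(-q^{n+1};q)_\infty=2(-q;q)_\infty\sum_{j=0}^{k-1}(-1)^j(q^{k-j};q)_j+(-1)^k(q;q)_{k-1}.$$
   Context: $D_k(n)$ is the number of partitions of $n$ into non-negative parts (the part $0$ is allowed) in which the smallest part appears exactly $k$ times and no other part is repeated, with the convention $D_k(0)=1$. For $N\ge1$, $(a;q)_N=\prod_{i=0}^{N-1}(1-aq^i)$; also $(a;q)_0=1$ and $(a;q)_\infty=\lim_{N\to\infty}(a;q)_N$. *)

From mathcomp Require Import all_boot all_order all_algebra.
Set Implicit Arguments. Unset Strict Implicit. Unset Printing Implicit Defensive.
Import GRing.Theory Num.Theory.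
Local Open Scope ring_scope.

Definition minpart (s : seq nat) : nat := foldr minn (head 0%N s) s.

(* s (written as a nonincreasing list of its parts) is a partition of n into
   non-negative parts in which the smallest part appears exactly k times and
   no other part is repeated. *)
Definition Dk_part (k n : nat) (s : seq nat) : bool :=
  [&& sorted geq s, s != [::], sumn s == n,
      count_mem (minpart s) s == k &
      uniq (filter (fun x => x != minpart s) s)].

(* Every such partition (for k >= 1) has at most n + k parts, each <= n, so
   it occurs (exactly once) in the following duplicate-free enumeration. *)
Definition bounded_lists (n k : nat) : seq (seq nat) :=
  flatten [seq [seq map (@nat_of_ord n.+1) (tval t) | t <- enum {: L.-tuple 'I_n.+1}]
          | L <- iota 0 (n + k).+1].

Definition D (k n : nat) : nat :=
  if n == 0%N then 1%N else count (Dk_part k n) (bounded_lists n k).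

Definition ps := nat -> int.

Definition ps_of_poly (p : {poly int}) : ps := fun m => p`_m.

Definition psadd (f g : ps) : ps := fun m => f m + g m.
Definition psmul (f g : ps) : ps :=
  fun m => \sum_(i < m.+1) f i * g (m - i)%N.

(* Infinite sum \sum_{n>=0} F n, well defined when F n has order >= n
   (then only n <= m contributes to the coefficient of q^m). *)
Definition pssum (F : nat -> ps) : ps := fun m => \sum_(n < m.+1) F n m.

Definition qpoch (a : {poly int}) (N : nat) : {poly int} :=
  \prod_(i < N) (1 - a * 'X^i).

(* (a;q)_oo for a with zero constant term: the factors with i > m are
   1 + O(q^(m+1)), so the coefficient of q^m is that of (a;q)_(m+1). *)
Definition qpoch_inf (a : {poly int}) : ps := fun m => (qpoch a m.+1)`_m.

Definition D_gf (k : nat) : ps := fun n => (D k n)%:Z.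

(** The partitions counted by D_k(n) are exactly the lists s ++ [n; ...; n]
    (k copies) with s a strictly decreasing list of parts larger than n, so
    their generating function is T_k = sum_n q^(nk) (-q^(n+1);q)_oo.  From
    (-q^n;q)_oo = (1 + q^n) (-q^(n+1);q)_oo we get
    q^n (-q^(n+1);q)_oo = (-q^n;q)_oo - (-q^(n+1);q)_oo, and summing against
    q^(nk) gives T_(k+1) = 2 (-q;q)_oo + (q^k - 1) T_k for k >= 1, while
    telescoping gives T_1 = 2 (-q;q)_oo - 1.  The right-hand side satisfies the
    same recurrence and initial value.  Everything is done modulo q^(m+1),
    where the infinite products become the polynomials (-q^(n+1);q)_(m+1). *)

From mathcomp Require Import all_boot all_order all_algebra.
From mathcomp Require Import ring.
From Stdlib Require Import FunctionalExtensionality.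
Import GRing.Theory Num.Theory.
Set Implicit Arguments. Unset Strict Implicit. Unset Printing Implicit Defensive.

(** * Partitions with a repeated smallest part *)

Fixpoint subseqs (T : Type) (s : seq T) : seq (seq T) :=
  if s is x :: s' then [seq x :: t | t <- subseqs s'] ++ subseqs s'
  else [:: [::]].

Lemma mem_subseqs (T : eqType) (s t : seq T) : (t \in subseqs s) = subseq t s.
Proof.
elim: s t => [|x s IHs] [|y t] //=; rewrite mem_cat IHs ?sub0seq ?orbT //.
have [->|neq_yx] := eqVneq y x.
  rewrite mem_map; last by move=> ? ? [].
  by rewrite IHs; apply/orb_idr/subseq_trans/subseq_cons.
by apply/orb_idl => /mapP[? _ [eq_yx _]]; rewrite eq_yx eqxx in neq_yx.
Qed.

Lemma subseqs_uniq (T : eqType) (s : seq T) : uniq s -> uniq (subseqs s).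
Proof.
elim: s => [|x s IHs] //= /andP[xNs /IHs uniq_subs].
rewrite cat_uniq map_inj_uniq ?uniq_subs ?andbT /=; last by move=> ? ? [].
apply/hasPn => t; rewrite mem_subseqs => t_sub; apply/mapP => -[u _ eq_t].
by move: xNs; rewrite (mem_subseq t_sub) // eq_t mem_head.
Qed.

Lemma uniq_flatten_map_key (I T : eqType) (F : I -> seq T) (key : T -> I) r :
  uniq r -> (forall i, uniq (F i)) -> (forall i x, x \in F i -> key x = i) ->
  uniq (flatten (map F r)).
Proof.
move=> + uniqF keyF; elim: r => //= i r IHr /andP[iNr /IHr uniq_r].
rewrite cat_uniq uniqF uniq_r andbT /=; apply/hasPn => x /flatten_mapP[j jr xFj].
by apply/negP => /keyF key_i; move: iNr; rewrite -key_i (keyF _ _ xFj) jr.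
Qed.

Lemma sorted_subset_subseq (T : eqType) (r : rel T) (s1 s2 : seq T) :
  transitive r -> irreflexive r -> sorted r s1 -> sorted r s2 ->
  {subset s1 <= s2} -> subseq s1 s2.
Proof.
move=> r_trans r_irr sorted1 sorted2 sub12.
have -> : s1 = [seq x <- s2 | x \in s1].
  apply: (irr_sorted_eq r_trans r_irr sorted1 (sorted_filter r_trans _ sorted2)).
  by move=> x; rewrite mem_filter; case: (boolP (x \in s1)) => // /sub12 ->.
exact: filter_subseq.
Qed.

Lemma geq_trans : transitive geq. Proof. exact: rev_trans leq_trans. Qed.
Lemma gtn_trans : transitive gtn. Proof. exact: rev_trans ltn_trans. Qed.

Lemma sorted_geq_cat_nseq (s : seq nat) k n :
  {in s, forall x, n <= x} -> sorted geq (s ++ nseq k n) = sorted geq s.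
Proof.
move=> s_ge_n; rewrite !(sorted_pairwise geq_trans) pairwise_cat andbC.
have -> : pairwise geq (nseq k n).
  by elim: k => //= k ->; rewrite all_nseq /= leqnn orbT.
by rewrite andbT; case: pairwise => //=; apply/allrelP => x y /s_ge_n + /nseqP[-> _].
Qed.

Lemma sorted_geq_split (t : seq nat) n :
  sorted geq t -> {in t, forall x, n <= x} ->
  t = [seq x <- t | x != n] ++ nseq (count_mem n t) n.
Proof.
move=> sorted_t t_ge_n.
have geq_anti : antisymmetric geq by move=> x y /anti_leq.
have filter_n : [seq x <- t | x == n] = nseq (count_mem n t) n.
  by rewrite -size_filter; apply/all_pred1P/filter_all.
apply: (sorted_eq geq_trans geq_anti sorted_t).
  rewrite sorted_geq_cat_nseq ?sorted_filter //; first exact: geq_trans.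
  by move=> x; rewrite mem_filter => /andP[_ /t_ge_n].
have filterC_n : [seq x <- t | predC (fun x => x != n) x] = [seq x <- t | x == n].
  by apply: eq_filter => x /=; rewrite negbK.
by rewrite -filter_n perm_sym -filterC_n perm_filterC.
Qed.

Lemma foldr_minn_le a (s : seq nat) x : x \in s -> foldr minn a s <= x.
Proof.
elim: s => //= y s IHs; rewrite inE => /predU1P[->|/IHs]; first exact: geq_minl.
exact: leq_trans (geq_minr _ _).
Qed.

Lemma foldr_minn_mem a (s : seq nat) : foldr minn a s \in a :: s.
Proof.
elim: s => [|y s IHs] /=; first exact: mem_head.
rewrite /minn; case: ltnP => _; first by rewrite !inE eqxx orbT.
by move: IHs; rewrite !inE => /orP[]->; rewrite ?orbT.
Qed.

Lemma minpart_le (t : seq nat) x : x \in t -> minpart t <= x.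
Proof. exact: foldr_minn_le. Qed.

Lemma minpart_mem (t : seq nat) : t != [::] -> minpart t \in t.
Proof.
case: t => // y t _; change (foldr minn y (y :: t) \in y :: t).
by have := foldr_minn_mem y (y :: t); rewrite inE => /predU1P[->|]; rewrite ?mem_head.
Qed.

Lemma leq_sumn (s : seq nat) x : x \in s -> x <= sumn s.
Proof.
elim: s => //= y s IHs; rewrite inE => /predU1P[->|/IHs]; first exact: leq_addr.
by move/leq_trans; apply; apply: leq_addl.
Qed.

Lemma size_le_sumn (s : seq nat) : all (leq 1) s -> size s <= sumn s.
Proof. by elim: s => //= y s IHs /andP[y_gt0 /IHs]; rewrite -add1n; apply: leq_add. Qed.

Definition upper_parts (m n : nat) : seq nat := rev (iota n.+1 m.+1).

Lemma subseq_upper_parts m n s :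
  subseq s (upper_parts m n) = sorted gtn s && all (fun x => n < x <= n + m.+1) s.
Proof.
have sorted_up : sorted gtn (upper_parts m n) by rewrite rev_sorted iota_ltn_sorted.
have mem_up x : (x \in upper_parts m n) = (n < x <= n + m.+1).
  by rewrite mem_rev mem_iota addSn ltnS.
apply/idP/andP => [sub | [sorted_s /allP s_in]].
  split; first exact: (subseq_sorted gtn_trans sub sorted_up).
  by apply/allP => x /(mem_subseq sub); rewrite mem_up.
apply: (sorted_subset_subseq gtn_trans ltnn sorted_s sorted_up) => x /s_in.
by rewrite mem_up.
Qed.

Section DkPartitions.
Variables (k : nat) (k_gt0 : 0 < k).

Lemma Dk_part_cat_nseq m n (s : seq nat) : all (fun x => n < x) s ->
  Dk_part k m (s ++ nseq k n) = sorted gtn s && (sumn (s ++ nseq k n) == m).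
Proof.
move=> /allP s_gt_n.
have n_t : n \in s ++ nseq k n by rewrite mem_cat mem_nseq k_gt0 eqxx orbT.
have t_ge_n : {in s ++ nseq k n, forall x, n <= x}.
  by move=> x; rewrite mem_cat mem_nseq => /orP[/s_gt_n/ltnW|/andP[_ /eqP->]].
have t_nil : s ++ nseq k n != [::] by apply: contraTneq n_t => ->.
have min_t : minpart (s ++ nseq k n) = n.
  by apply/anti_leq; rewrite minpart_le // t_ge_n // minpart_mem.
have n_notin_s : n \notin s by apply/negP => /s_gt_n; rewrite ltnn.
rewrite /Dk_part min_t sorted_geq_cat_nseq; last by move=> x /s_gt_n/ltnW.
rewrite t_nil count_cat count_nseq (count_memPn n_notin_s) /= eqxx mul1n eqxx.
rewrite filter_cat filter_nseq eqxx mul0n cats0 gtn_sorted_uniq_geq.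
have -> : [seq x <- s | x != n] = s by apply/all_filterP/allP => x /s_gt_n/gtn_eqF->.
by case: (uniq s); rewrite /= ?andbT ?andbF.
Qed.

Lemma Dk_part_split m t : Dk_part k m t ->
  t = [seq x <- t | x != minpart t] ++ nseq k (minpart t).
Proof.
case/and5P => sorted_t _ _ /eqP count_min _; rewrite -count_min.
by apply: sorted_geq_split => // x; apply: minpart_le.
Qed.

Definition Dk_lists (m : nat) : seq (seq nat) :=
  [seq s ++ nseq k n | n <- iota 0 m.+1, s <- subseqs (upper_parts m n)].

Lemma Dk_part_lists m t : Dk_part k m t = (sumn t == m) && (t \in Dk_lists m).
Proof.
apply/idP/andP => [Dt | [/eqP sum_t /allpairsPdep[n [s [_ +]]]]]; last first.
  rewrite mem_subseqs subseq_upper_parts => /andP[sorted_s /allP s_in] t_eq.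
  rewrite t_eq Dk_part_cat_nseq; last by apply/allP => x /s_in/andP[].
  by rewrite -t_eq sorted_s sum_t eqxx.
set n := minpart t; set s := [seq x <- t | x != n].
have t_eq : t = s ++ nseq k n := Dk_part_split Dt.
have s_gt_n : all (fun x => n < x) s.
  by apply/allP => x; rewrite mem_filter ltn_neqAle eq_sym => /andP[-> /minpart_le].
move: Dt; rewrite {1}t_eq Dk_part_cat_nseq // => /andP[sorted_s /eqP sum_t].
have le_m x : x \in t -> x <= m by rewrite t_eq -sum_t; apply: leq_sumn.
split; first by rewrite t_eq sum_t.
rewrite t_eq; apply/allpairsPdep; exists n, s; split => //.
  by rewrite mem_iota ltnS le_m // t_eq mem_cat mem_nseq k_gt0 eqxx orbT.
rewrite mem_subseqs subseq_upper_parts sorted_s; apply/allP => x xs.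
rewrite (allP s_gt_n) //= ltnW // ltn_addl // ltnS le_m //.
by rewrite t_eq mem_cat xs.
Qed.

Lemma Dk_lists_uniq m : uniq (Dk_lists m).
Proof.
apply: (uniq_flatten_map_key (key := last 0)); first exact: iota_uniq.
  move=> n; rewrite map_inj_uniq ?subseqs_uniq ?rev_uniq ?iota_uniq //.
  apply: (can_inj (g := fun t => take (size t - k) t)) => s.
  by rewrite size_cat size_nseq addnK take_size_cat.
move=> n _ /mapP[s _ ->]; rewrite last_cat.
by case: k k_gt0 => // k' _; elim: k' => /=.
Qed.

Lemma bounded_lists_uniq m : uniq (bounded_lists m k).
Proof.
apply: (uniq_flatten_map_key (key := size)); first exact: iota_uniq.
  move=> L; rewrite map_inj_uniq ?enum_uniq //.
  by move=> t1 t2 /(inj_map val_inj)/val_inj.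
by move=> L _ /mapP[t _ ->]; rewrite size_map size_tuple.
Qed.

Lemma Dk_part_bounded_lists m t : Dk_part k m t -> t \in bounded_lists m k.
Proof.
move=> Dt; have sum_t : sumn t = m by case/and5P: Dt => _ _ /eqP.
have le_m x : x \in t -> x <= m by rewrite -sum_t; apply: leq_sumn.
have size_t : size t <= m + k.
  set n := minpart t; set s := [seq x <- t | x != n].
  have t_eq : t = s ++ nseq k n := Dk_part_split Dt.
  rewrite t_eq size_cat size_nseq leq_add2r; apply: leq_trans (size_le_sumn _) _.
    apply/allP => x; rewrite mem_filter => /andP[x_neq x_t].
    by apply: leq_ltn_trans (leq0n n) _; rewrite ltn_neqAle eq_sym x_neq minpart_le.
  by rewrite -sum_t t_eq sumn_cat leq_addr.
apply/allpairsPdep; exists (size t), (map_tuple (@inord m) (in_tuple t)); split.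
- by rewrite mem_iota ltnS.
- by rewrite mem_enum.
by rewrite /= -map_comp map_id_in // => x /le_m x_le_m /=; rewrite inordK.
Qed.

Lemma count_Dk_part m :
  count (Dk_part k m) (bounded_lists m k) = count (fun t => sumn t == m) (Dk_lists m).
Proof.
rewrite -!size_filter; apply/perm_size/uniq_perm.
- by rewrite filter_uniq ?bounded_lists_uniq.
- by rewrite filter_uniq ?Dk_lists_uniq.
by move=> t; rewrite !mem_filter /= -Dk_part_lists; apply/andb_idr/Dk_part_bounded_lists.
Qed.

End DkPartitions.

(** * Truncated generating functions *)

Local Open Scope ring_scope.

Section CongruenceModXn.
Variable R : comNzRingType.
Implicit Types p q : {poly R}.

Definition eqmodX (n : nat) p q := exists r, p = q + 'X^n * r.

Lemma eqmodX_refl n p : eqmodX n p p.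
Proof. by exists 0; rewrite mulr0 addr0. Qed.

Lemma eqmodX_eq n p q : p = q -> eqmodX n p q.
Proof. by move->; apply: eqmodX_refl. Qed.

Lemma eqmodX_trans n p q s : eqmodX n p q -> eqmodX n q s -> eqmodX n p s.
Proof. by case=> r -> [r' ->]; exists (r' + r); ring. Qed.

Lemma eqmodXD n p q p' q' :
  eqmodX n p q -> eqmodX n p' q' -> eqmodX n (p + p') (q + q').
Proof. by case=> r -> [r' ->]; exists (r + r'); ring. Qed.

Lemma eqmodXB n p q p' q' :
  eqmodX n p q -> eqmodX n p' q' -> eqmodX n (p - p') (q - q').
Proof. by case=> r -> [r' ->]; exists (r - r'); ring. Qed.

Lemma eqmodXM n p q p' q' :
  eqmodX n p q -> eqmodX n p' q' -> eqmodX n (p * p') (q * q').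
Proof.
by case=> r -> [r' ->]; exists (r * q' + q * r' + r * 'X^n * r'); ring.
Qed.

Lemma eqmodX_sum n m (F G : 'I_m -> {poly R}) :
  (forall i, eqmodX n (F i) (G i)) ->
  eqmodX n (\sum_(i < m) F i) (\sum_(i < m) G i).
Proof.
move=> FG; apply: (big_ind2 (eqmodX n)) => //; first exact: eqmodX_refl.
by move=> *; apply: eqmodXD.
Qed.

Lemma eqmodX_prod n m (F G : 'I_m -> {poly R}) :
  (forall i, eqmodX n (F i) (G i)) ->
  eqmodX n (\prod_(i < m) F i) (\prod_(i < m) G i).
Proof.
move=> FG; apply: (big_ind2 (eqmodX n)) => //; first exact: eqmodX_refl.
by move=> *; apply: eqmodXM.
Qed.

Lemma eqmodX_prod1 n m (F : 'I_m -> {poly R}) :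
  (forall i, eqmodX n (F i) 1) -> eqmodX n (\prod_(i < m) F i) 1.
Proof. by move=> /eqmodX_prod; rewrite [X in eqmodX _ _ X]big1. Qed.

Lemma eqmodX_XnM0 n a p : (n <= a)%N -> eqmodX n ('X^a * p) 0.
Proof. by move=> /subnKC <-; exists ('X^(a - n) * p); rewrite add0r exprD mulrA. Qed.

Lemma eqmodX_coef n p q i : eqmodX n p q -> (i < n)%N -> p`_i = q`_i.
Proof. by case=> r -> ltin; rewrite coefD coefXnM ltin addr0. Qed.

End CongruenceModXn.

Lemma qpoch_addn_eqmodX (a : {poly int}) N d :
  eqmodX N (qpoch a (N + d)) (qpoch a N).
Proof.
rewrite /qpoch big_split_ord /= -[X in eqmodX _ _ X]mulr1.
apply: eqmodXM; first exact: eqmodX_refl.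
apply: eqmodX_prod1 => i; rewrite -[X in eqmodX _ _ X]subr0.
apply: eqmodXB; first exact: eqmodX_refl.
by rewrite exprD mulrCA; apply: eqmodX_XnM0.
Qed.

Lemma qpoch_inf_coef a N r : (r < N)%N -> qpoch_inf a r = (qpoch a N)`_r.
Proof.
move=> ltrN; rewrite /qpoch_inf -(subnKC ltrN).
by rewrite (eqmodX_coef (qpoch_addn_eqmodX _ _ _)).
Qed.

Definition negpoch (n N : nat) : {poly int} := \prod_(i < N) (1 + 'X^(n + i)).

Lemma qpochNX n N : qpoch (- 'X^n) N = negpoch n N.
Proof. by apply: eq_bigr => i _; rewrite mulNr opprK exprD. Qed.

Lemma negpochSl n N : negpoch n N.+1 = (1 + 'X^n) * negpoch n.+1 N.
Proof.
rewrite /negpoch big_ord_recl addn0; congr (_ * _).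
by apply: eq_bigr => i _; rewrite /= /bump add1n addSnnS.
Qed.

Lemma negpochSr n N : negpoch n N.+1 = negpoch n N * (1 + 'X^(n + N)).
Proof. by rewrite /negpoch big_ord_recr. Qed.

Lemma negpoch_eqmodX1 n N : (N <= n)%N -> eqmodX N (negpoch n N) 1.
Proof.
move=> leNn; apply: eqmodX_prod1 => i; rewrite -[X in eqmodX _ _ X]addr0.
apply: eqmodXD; first exact: eqmodX_refl.
rewrite -[X in eqmodX _ X _]mulr1; apply: eqmodX_XnM0.
exact: leq_trans (leq_addr _ _).
Qed.

Lemma negpoch_telescope n N :
  eqmodX N ('X^n * negpoch n.+1 N) (negpoch n N - negpoch n.+1 N).
Proof.
have := negpochSr n N; rewrite negpochSl exprD => e.
exists ('X^n * negpoch n N); apply/eqP; rewrite -subr_eq0; apply/eqP.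
transitivity ((1 + 'X^n) * negpoch n.+1 N - negpoch n N * (1 + 'X^n * 'X^N)).
  by ring.
by rewrite e subrr.
Qed.

(** Modulo [q^N], [Dgf_poly N k] is the series sum_n q^(nk) (-q^(n+1);q)_oo. *)
Definition Dgf_poly (N k : nat) : {poly int} :=
  \sum_(n < N) 'X^(n * k) * negpoch n.+1 N.

Definition qpoch_altsum (k : nat) : {poly int} :=
  \sum_(j < k) (-1) ^+ j * qpoch 'X^(k - j) j.

Lemma Dgf_polyS m k :
  eqmodX m.+1 (Dgf_poly m.+1 k.+1)
    (negpoch 1 m.+1 *+ 2 + ('X^k - 1) * Dgf_poly m.+1 k
     - 'X^(m.+1 * k) * negpoch m.+1 m.+1).
Proof.
set P := negpoch ^~ m.+1.
set A := \sum_(n < m) 'X^(n.+1 * k) * P n.+1.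
set B := \sum_(n < m) 'X^(n.+1 * k) * P n.+2.
have D_B : Dgf_poly m.+1 k = P 1%N + B by rewrite /Dgf_poly big_ord_recl mul1r.
have XkD : 'X^k * Dgf_poly m.+1 k = A + 'X^(m.+1 * k) * P m.+1.
  rewrite /Dgf_poly big_ord_recr mulrDr big_distrr /=.
  by congr (_ + _); [apply: eq_bigr => n _|]; rewrite mulrA -exprD mulSn.
apply: (@eqmodX_trans _ _ _ (P 1%N + (A - B))).
  rewrite /Dgf_poly big_ord_recl mul1r; apply: eqmodXD; first exact: eqmodX_refl.
  rewrite -sumrB; apply: eqmodX_sum => n.
  rewrite /= mulnSr exprD -mulrA -mulrBr.
  by apply: eqmodXM; [exact: eqmodX_refl | exact: negpoch_telescope].
by apply: eqmodX_eq; rewrite mulrBl XkD D_B /P; ring.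
Qed.

Lemma qpoch_altsumS k : qpoch_altsum k.+1 = 1 + ('X^k - 1) * qpoch_altsum k.
Proof.
rewrite /qpoch_altsum big_ord_recl subn0 /qpoch big_ord0 mulr1; congr (_ + _).
rewrite big_distrr; apply: eq_bigr => j _.
rewrite /= /bump add1n subSS big_ord_recr /= -exprD subnK; last exact: ltnW.
rewrite exprS; ring.
Qed.

Lemma Dgf_poly_closed m k : (0 < k)%N ->
  eqmodX m.+1 (Dgf_poly m.+1 k)
    (negpoch 1 m.+1 *+ 2 * qpoch_altsum k + (-1) ^+ k * qpoch 'X k.-1).
Proof.
case: k => // k _; elim: k => [|k IHk].
  apply: (eqmodX_trans (Dgf_polyS m 0)); rewrite muln0 expr0 mul1r.
  apply: eqmodX_trans (eqmodXB (eqmodX_refl _ _) (negpoch_eqmodX1 (leqnn _))) _.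
  apply: eqmodX_eq; rewrite /qpoch_altsum big_ord1 /qpoch !big_ord0 /=; ring.
apply: (eqmodX_trans (Dgf_polyS m k.+1)).
rewrite -[X in eqmodX _ _ X]subr0; apply: eqmodXB.
  apply: eqmodX_trans (eqmodXD (eqmodX_refl _ _) (eqmodXM (eqmodX_refl _ _) IHk)) _.
  by apply: eqmodX_eq; rewrite (qpoch_altsumS k.+1) /qpoch big_ord_recr /= !exprS; ring.
by apply: eqmodX_XnM0; rewrite leq_pmulr.
Qed.

Lemma prod_1DXn_subseqs (R : nzSemiRingType) (s : seq nat) :
  \prod_(x <- s) (1 + 'X^x) = \sum_(t <- subseqs s) 'X^(sumn t) :> {poly R}.
Proof.
elim: s => [|x s IHs]; first by rewrite big_nil big_seq1.
rewrite big_cons IHs big_cat big_map mulrDl mul1r big_distrr addrC /=.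
by congr (_ + _); apply: eq_bigr => t _; rewrite exprD.
Qed.

Lemma coef_sum_Xn_sumn (R : nzSemiRingType) (L : seq (seq nat)) m :
  (\sum_(t <- L) 'X^(sumn t) : {poly R})`_m = (count (fun t => sumn t == m) L)%:R.
Proof.
elim: L => [|t L IHL]; first by rewrite big_nil coef0.
by rewrite big_cons coefD IHL coefXn /= natrD eq_sym.
Qed.

Lemma negpoch_upper_parts m n :
  negpoch n.+1 m.+1 = \prod_(x <- upper_parts m n) (1 + 'X^x).
Proof.
rewrite /upper_parts big_rev.
have -> : iota n.+1 m.+1 = map (addn n.+1) (iota 0 m.+1) by rewrite -iotaDl addn0.
by rewrite big_map -/(index_iota 0 m.+1) big_mkord.
Qed.

Lemma Dgf_poly_Dk_lists k m : Dgf_poly m.+1 k = \sum_(t <- Dk_lists k m) 'X^(sumn t).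
Proof.
rewrite big_allpairs_dep /Dgf_poly -/(index_iota 0 m.+1) big_mkord.
apply: eq_bigr => n _; rewrite negpoch_upper_parts prod_1DXn_subseqs big_distrr.
by apply: eq_bigr => s _; rewrite sumn_cat sumn_nseq addnC exprD.
Qed.

Lemma D_gf_coef k m : (0 < k)%N -> D_gf k m = (Dgf_poly m.+1 k)`_m.
Proof.
move=> k_gt0; rewrite /D_gf /D; case: m => [|m] /=.
  by rewrite /Dgf_poly big_ord1 mul1r /negpoch big_ord1 coefD coef1 coefXn.
by rewrite count_Dk_part // Dgf_poly_Dk_lists coef_sum_Xn_sumn natz.
Qed.

Lemma psmul_coef (e f : ps) (p q : {poly int}) m :
  (forall i, (i <= m)%N -> e i = p`_i) -> (forall i, (i <= m)%N -> f i = q`_i) ->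
  psmul e f m = (p * q)`_m.
Proof.
move=> ep fq; rewrite coefM; apply: eq_bigr => i _.
by rewrite ep ?fq ?leq_subr // -ltnS.
Qed.

Lemma qpoch_infNX_coef n N i :
  (i < N)%N -> qpoch_inf (- 'X^(n.+1)) i = (negpoch n.+1 N)`_i.
Proof. by move=> ltiN; rewrite (qpoch_inf_coef _ ltiN) qpochNX. Qed.

Lemma Dgf_series_coef k m :
  pssum (fun n => psmul (ps_of_poly 'X^(n * k)) (qpoch_inf (- 'X^(n.+1)))) m =
  (Dgf_poly m.+1 k)`_m.
Proof.
rewrite /pssum /Dgf_poly coef_sum; apply: eq_bigr => n _.
by apply: psmul_coef => // i leim; apply: qpoch_infNX_coef; rewrite ltnS.
Qed.

Lemma closed_series_coef k m :
  psadd
      (psmul (fun m => 2 * qpoch_inf (- 'X) m)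
             (ps_of_poly (\sum_(j < k) (-1) ^+ j * qpoch 'X^(k - j) j)))
      (ps_of_poly ((-1) ^+ k * qpoch 'X k.-1)) m =
  (negpoch 1 m.+1 *+ 2 * qpoch_altsum k + (-1) ^+ k * qpoch 'X k.-1)`_m.
Proof.
rewrite coefD; congr (_ + _); apply: psmul_coef => // i leim.
by rewrite coefMn mulr_natl; have := @qpoch_infNX_coef 0 m.+1 i; rewrite expr1 => ->.
Qed.

Unset Implicit Arguments.

Theorem theorem10 (k : nat) (hk : (0 < k)%N) :
  D_gf k =
    pssum (fun n => psmul (ps_of_poly 'X^(n * k)) (qpoch_inf (- 'X^(n.+1))))
  /\
  pssum (fun n => psmul (ps_of_poly 'X^(n * k)) (qpoch_inf (- 'X^(n.+1)))) =
    psadd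
      (psmul (fun m => 2 * qpoch_inf (- 'X) m)
             (ps_of_poly (\sum_(j < k) (-1) ^+ j * qpoch 'X^(k - j) j)))
      (ps_of_poly ((-1) ^+ k * qpoch 'X k.-1)).
Proof.
split; apply: functional_extensionality => m; rewrite Dgf_series_coef.
  exact: D_gf_coef.
by rewrite closed_series_coef (eqmodX_coef (Dgf_poly_closed m hk)).
Qed.
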